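(* Let $\varepsilon\ge 0$ be real and $p,q$ positive integers with $p/q\ge 2$. For every fractional $(p/q+\varepsilon)$-coloring $c$ of the Kneser graph $K_{p/q}$ there exists a vertex $v$ of $K_{p/q}$ such that the Lebesgue measure of $\bigcup_{u\in N(v)}c(u)$ is at least $p/q-1$, where $N(v)$ is the set of neighbors of $v$.
   Context: For integers $1\le q\le p$, the Kneser graph $K_{p/q}$ has as vertices all $q$-element subsets of $[p]$, two being adjacent iff they are disjoint. A fractional $m$-coloring of a graph (real $m>0$) assigns to each vertex a measurable subset of $[0,m)$ of Lebesgue measure one so that adjacent vertices receive disjoint sets. *)

From mathcomp Require Import all_boot.
From Stdlib Require Import Reals.

Set Implicit Arguments.
Unset Strict Implicit.
Unset Printing Implicit Defensive.

Local Open Scope R_scope.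

Definition covers (A : R -> Prop) (a b : nat -> R) : Prop :=
  forall x, A x -> exists n : nat, a n <= x < b n.

Definition cover_sum (A : R -> Prop) (s : R) : Prop :=
  exists a b : nat -> R,
    (forall n, a n <= b n) /\ covers A a b /\ infinite_sum (fun n => b n - a n) s.

Definition outer_measure_is (A : R -> Prop) (r : R) : Prop :=
  (exists s, cover_sum A s) /\
  (forall s, cover_sum A s -> r <= s) /\
  (forall r', (forall s, cover_sum A s -> r' <= s) -> r' <= r).

(* Caratheodory measurability (test sets of finite outer measure). *)
Definition lebesgue_measurable (A : R -> Prop) : Prop :=
  forall (E : R -> Prop) (rE : R), outer_measure_is E rE ->
    exists r1 r2, outer_measure_is (fun x => E x /\ A x) r1 /\
                  outer_measure_is (fun x => E x /\ ~ A x) r2 /\ rE = r1 + r2.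

Definition lebesgue_measure_is (A : R -> Prop) (r : R) : Prop :=
  lebesgue_measurable A /\ outer_measure_is A r.

Definition kneser_vertex (p q : nat) (A : {set 'I_p}) : bool := #|A| == q.

Definition kneser_adj (p q : nat) (A B : {set 'I_p}) : bool :=
  [&& kneser_vertex q A, kneser_vertex q B & [disjoint A & B]].

Definition fractional_coloring (p q : nat) (m : R)
    (c : {set 'I_p} -> R -> Prop) : Prop :=
  (forall v, kneser_vertex q v ->
      (forall x, c v x -> 0 <= x < m) /\ lebesgue_measure_is (c v) 1) /\
  (forall u v, kneser_adj q u v -> forall x, ~ (c u x /\ c v x)).

Definition neighbour_union (p q : nat) (c : {set 'I_p} -> R -> Prop)
    (v : {set 'I_p}) : R -> Prop :=
  fun x => exists u, kneser_adj q u v /\ c u x.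

From HB Require Import structures.
From mathcomp Require Import all_boot zify.
From Stdlib Require Import Reals Lra Classical ClassicalEpsilon.
From Stdlib Require Import FunctionalExtensionality PropExtensionality.

(* Proof by averaging over the p circular vertices arc i = {i, ..., i + q - 1}
   (mod p). The colour classes of these arcs cut [0, m) into 2^p atoms
   (Caratheodory splitting). An atom of positive mass carries a family K of arcs
   that is intersecting, since adjacent vertices get disjoint colours, and a
   Katona-type cyclic argument gives p |K| <= q (|M| + |K|), where M is the set of
   arcs disjoint from some arc of K; the atom lies in the neighbourhood union of
   every arc of M. Weighting by the atom masses and summing over atoms and arcs
   yields sum_i (q |N(arc i)| + q - p) >= 0, so some arc has |N(arc i)| >= p/q - 1. *)

Set Implicit Arguments.
Unset Strict Implicit.
Unset Printing Implicit Defensive.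

Local Open Scope R_scope.

Lemma pred_ext (A B : R -> Prop) : (forall x, A x <-> B x) -> A = B.
Proof.
by move=> AB; apply: functional_extensionality => x; apply: propositional_extensionality.
Qed.

Lemma infinite_sum_ge0 (f : nat -> R) (s : R) :
  (forall k, 0 <= f k) -> infinite_sum f s -> 0 <= s.
Proof.
move=> f_ge0 fs; apply: (@Rle_cv_lim (fun _ => 0) (sum_f_R0 f)) fs.
- by move=> k; apply: cond_pos_sum.
- by move=> e e_gt0; exists 0%nat => k _; rewrite /R_dist Rminus_0_r Rabs_R0.
Qed.

Lemma infinite_sum_head (f : nat -> R) : (forall k, f k.+1 = 0) -> infinite_sum f (f 0%nat).
Proof.
move=> f_tail e e_gt0; exists 0%nat => k _.
have -> : sum_f_R0 f k = f 0%nat by elim: k => [|k IHk] //=; rewrite IHk f_tail Rplus_0_r.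
by rewrite /R_dist Rminus_diag_eq // Rabs_R0.
Qed.

Lemma cover_sum_ge0 (A : R -> Prop) (s : R) : cover_sum A s -> 0 <= s.
Proof.
move=> [a [b [ab [_ abs]]]]; apply: infinite_sum_ge0 abs => k.
by have := ab k; lra.
Qed.

Lemma cover_sum_sub (A B : R -> Prop) (s : R) :
  (forall x, A x -> B x) -> cover_sum B s -> cover_sum A s.
Proof.
move=> AB [a [b [ab [Bab abs]]]]; exists a, b.
by split; [|split] => // x /AB /Bab.
Qed.

Lemma cover_sum_interval (m : R) : 0 <= m -> cover_sum (fun x => 0 <= x < m) m.
Proof.
move=> m_ge0; exists (fun _ => 0), (fun k => if k is 0%nat then m else 0).
split; first by case=> [|k]; lra.
split; first by move=> x x_in; exists 0%nat.
pose len k := (if k is 0%nat then m else 0) - 0.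
have len_tail : forall k, len k.+1 = 0 by move=> k; rewrite /len; lra.
by have := infinite_sum_head len_tail; rewrite /len Rminus_0_r.
Qed.

Lemma outer_measure_unique (A : R -> Prop) (r r' : R) :
  outer_measure_is A r -> outer_measure_is A r' -> r = r'.
Proof.
move=> [_ [r_low r_inf]] [_ [r'_low r'_inf]].
by apply: Rle_antisym; [apply: r'_inf | apply: r_inf].
Qed.

Lemma outer_measure_ge0 (A : R -> Prop) (r : R) : outer_measure_is A r -> 0 <= r.
Proof. by move=> [_ [_ r_inf]]; apply: r_inf => s; apply: cover_sum_ge0. Qed.

(* Every set with some countable cover of finite length has an outer measure:
   the infimum of the cover lengths, obtained by completeness of R. *)
Lemma outer_measure_exists (A : R -> Prop) :
  (exists s, cover_sum A s) -> exists r, outer_measure_is A r.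
Proof.
move=> A_cov.
pose negated_sums (y : R) := exists s, cover_sum A s /\ y = - s.
have bounded : bound negated_sums.
  by exists 0 => y [s [As ->]]; have := cover_sum_ge0 As; lra.
have inhabited : exists y, negated_sums y by case: A_cov => s As; exists (- s), s.
have [l [l_ub l_lub]] := completeness negated_sums bounded inhabited.
exists (- l); split=> //; split.
- by move=> s As; have := l_ub (- s) (ex_intro _ s (conj As erefl)); lra.
- move=> r' r'_low; suff : l <= - r' by lra.
  by apply: l_lub => y [s [As ->]]; have := r'_low s As; lra.
Qed.

Lemma outer_measure_empty (A : R -> Prop) : (forall x, ~ A x) -> outer_measure_is A 0.
Proof.
move=> A0.
have cov0 : cover_sum A 0.
  by apply: cover_sum_sub (cover_sum_interval (Rle_refl 0)) => x /A0.
split; first by exists 0.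
by split=> [s|r' r'_low]; [apply: cover_sum_ge0 | apply: r'_low].
Qed.

(* The outer measure of A, when it exists (chosen by Hilbert's epsilon). *)
Definition om (A : R -> Prop) : R := epsilon (inhabits 0) (outer_measure_is A).

Lemma omE (A : R -> Prop) (r : R) : outer_measure_is A r -> om A = r.
Proof.
move=> Ar; apply: (outer_measure_unique _ Ar).
by apply: (epsilon_spec (inhabits 0) (outer_measure_is A)); exists r.
Qed.

Lemma bounded_outer_measure (m : R) (m_ge0 : 0 <= m) (A : R -> Prop) :
  (forall x, A x -> 0 <= x < m) -> outer_measure_is A (om A).
Proof.
move=> A_bounded; have [r Ar] : exists r, outer_measure_is A r.
  by apply: outer_measure_exists; exists m; apply: cover_sum_sub (cover_sum_interval m_ge0).
by rewrite (omE Ar).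
Qed.

Lemma bounded_om_ge0 (m : R) (m_ge0 : 0 <= m) (A : R -> Prop) :
  (forall x, A x -> 0 <= x < m) -> 0 <= om A.
Proof. by move/(bounded_outer_measure m_ge0)/outer_measure_ge0. Qed.

Lemma RplusA : associative Rplus. Proof. by move=> x y z; rewrite Rplus_assoc. Qed.
HB.instance Definition _ := Monoid.isComLaw.Build R 0 Rplus RplusA Rplus_comm Rplus_0_l.

Notation "\sum_ ( i <- r | P ) F" := (\big[Rplus/0%R]_(i <- r | P%B) F%R) : R_scope.
Notation "\sum_ ( i <- r ) F" := (\big[Rplus/0%R]_(i <- r) F%R) : R_scope.
Notation "\sum_ ( i : T | P ) F" := (\big[Rplus/0%R]_(i : T | P%B) F%R) : R_scope.
Notation "\sum_ ( i : T ) F" := (\big[Rplus/0%R]_(i : T) F%R) : R_scope.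
Notation "\sum_ ( i 'in' A ) F" := (\big[Rplus/0%R]_(i in A) F%R) : R_scope.

Lemma sum_le (I : eqType) (r : seq I) (P : pred I) (F G : I -> R) :
  (forall i, i \in r -> P i -> F i <= G i) ->
  \sum_(i <- r | P i) F i <= \sum_(i <- r | P i) G i.
Proof.
move=> FG; rewrite big_seq_cond [X in _ <= X]big_seq_cond.
apply: (big_ind2 Rle (Rle_refl 0)) => [x1 x2 y1 y2|i /andP[]]; first exact: Rplus_le_compat.
exact: FG.
Qed.

Lemma sum_scale (I : Type) (r : seq I) (P : pred I) (a : R) (F : I -> R) :
  a * \sum_(i <- r | P i) F i = \sum_(i <- r | P i) a * F i.
Proof.
elim: r => [|x r IHr]; first by rewrite !big_nil Rmult_0_r.
by rewrite !big_cons -IHr; case: (P x); ring.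
Qed.

Lemma sum_const_card (T : finType) (A : {pred T}) (x : R) :
  \sum_(i in A) x = INR #|A| * x.
Proof.
rewrite big_const; elim: #|A| => [|k IHk]; first by rewrite Rmult_0_l.
by rewrite iterS IHk S_INR; ring.
Qed.

Lemma sum_ge0_witness (I : finType) (F : I -> R) (i0 : I) :
  0 <= \sum_(i : I) F i -> exists i, 0 <= F i.
Proof.
move=> sum_ge0; apply: NNPP => no_witness.
have F_lt0 i : F i < 0 by apply: Rnot_le_lt => Fi_ge0; apply: no_witness; exists i.
have rest_le0 : \sum_(i : I | i != i0) F i <= 0.
  by apply: (big_ind (fun s => s <= 0)) => [|x y|i _]; [lra | lra | apply: Rlt_le].
by move: sum_ge0; rewrite (bigD1 i0) //= => sum_ge0; have := F_lt0 i0; lra.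
Qed.

Fixpoint sign_vectors (n : nat) : seq (seq bool) :=
  if n is n'.+1 then map (cons true) (sign_vectors n') ++ map (cons false) (sign_vectors n')
  else [:: [::]].

Lemma size_sign_vectors (n : nat) (bs : seq bool) : bs \in sign_vectors n -> size bs = n.
Proof.
elim: n bs => [|n IHn] bs /=; first by rewrite inE => /eqP ->.
by rewrite mem_cat => /orP[] /mapP [bs' /IHn <- ->].
Qed.

(* The atom of the family (C k)_k with sign vector bs: the points lying in
   C k exactly for those k < size bs with bs_k = true. *)
Fixpoint atom (C : nat -> R -> Prop) (bs : seq bool) (x : R) : Prop :=
  if bs is b :: bs' then (b <-> C 0%nat x) /\ atom (fun k => C k.+1) bs' x else True.

Lemma atomP (C : nat -> R -> Prop) (bs : seq bool) (x : R) (k : nat) :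
  atom C bs x -> (k < size bs)%nat -> (nth false bs k <-> C k x).
Proof.
elim: bs C k => [|b bs IHbs] C [|k] //= [b_C0 x_atom] k_lt //.
exact: (IHbs (fun k => C k.+1)).
Qed.

Lemma outer_measure_atoms (n : nat) (C : nat -> R -> Prop) :
  (forall k, lebesgue_measurable (C k)) ->
  forall (E : R -> Prop) (rE : R), outer_measure_is E rE ->
  rE = \sum_(bs <- sign_vectors n) om (fun x => E x /\ atom C bs x).
Proof.
elim: n C => [|n IHn] C C_meas E rE ErE /=.
  rewrite big_seq1; symmetry; apply: omE.
  by rewrite (_ : (fun x => E x /\ True) = E) //; apply: pred_ext; tauto.
have [r1 [r2 [E_in [E_out ->]]]] := C_meas 0%nat E rE ErE.
have true_iff (P : Prop) : (true <-> P) <-> P by split=> [[+ _]|Px]; [apply | split].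
have false_iff (P : Prop) : (false <-> P) <-> ~ P.
  by split=> [[_ +] Px|nP]; [move/(_ Px) | split=> // /nP].
have C'_meas k : lebesgue_measurable (C k.+1) by apply: C_meas.
rewrite big_cat !big_map (IHn _ C'_meas _ _ E_in) (IHn _ C'_meas _ _ E_out).
congr Rplus; apply: eq_bigr => bs _; congr om; apply: pred_ext => x /=.
- by rewrite true_iff; tauto.
- by rewrite false_iff; tauto.
Qed.

Section CircularArcs.
Local Open Scope nat_scope.
Variables p q : nat.

Definition cdist (x y : nat) : nat := if x <= y then y - x else y + p - x.
Definition cshift (x t : nat) : nat := if x + t < p then x + t else x + t - p.

(* Unfolds the case distinctions of cdist/cshift, leaving linear arithmetic. *)
Ltac case_ifs := repeat match goal with
 | |- context [if ?b then _ else _] =>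
     lazymatch b with context [if _ then _ else _] => fail | _ =>
       let H := fresh "Hif" in case H : b end
 end.

Lemma cshift_lt (x t : nat) : x < p -> t < p -> cshift x t < p.
Proof. by rewrite /cshift; case_ifs; lia. Qed.

Definition shift (t : nat) (t_lt : t < p) (j : 'I_p) : 'I_p :=
  Ordinal (cshift_lt (ltn_ord j) t_lt).

Definition arc (i : 'I_p) : {set 'I_p} := [set j : 'I_p | cdist i j < q].

Lemma card_arc (q_le_p : q <= p) (i : 'I_p) : #|arc i| = q.
Proof.
have f_lt (t : 'I_q) : cshift i t < p.
  by apply: cshift_lt => //; have := ltn_ord t; lia.
pose f (t : 'I_q) : 'I_p := Ordinal (f_lt t).
have -> : arc i = f @: [set: 'I_q].
  apply/setP => j; rewrite inE; apply/idP/imsetP => [j_in | [t _ ->]].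
  - exists (Ordinal j_in); first by rewrite inE.
    apply/val_inj => /=; move: j_in; have := ltn_ord i; have := ltn_ord j.
    by rewrite /cshift /cdist; case_ifs; lia.
  - rewrite /cdist /f /= /cshift; have := ltn_ord i; have := ltn_ord t.
    by case_ifs; lia.
rewrite card_in_imset ?cardsT ?card_ord // => t1 t2 _ _ /(congr1 val) /=.
have := ltn_ord i; have := ltn_ord t1; have := ltn_ord t2.
by rewrite /cshift; case_ifs => *; apply/val_inj => /=; lia.
Qed.

Lemma arc_vertex (q_le_p : q <= p) (i : 'I_p) : kneser_vertex q (arc i).
Proof. by rewrite /kneser_vertex card_arc. Qed.

Lemma arc_disjoint (i k : 'I_p) : q <= cdist i k <= p - q -> [disjoint arc i & arc k].
Proof.
move=> far; apply/pred0P => j /=; rewrite !inE; apply/negP => /andP [].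
move: far; have := ltn_ord i; have := ltn_ord j; have := ltn_ord k.
by rewrite /cdist; case_ifs; lia.
Qed.

Definition blocked (K : {set 'I_p}) : {set 'I_p} :=
  [set i | [exists k in K, [disjoint arc k & arc i]]].

Section Katona.
Hypothesis q_gt0 : 0 < q.
Hypothesis two_q_le_p : 2 * q <= p.

Section IntersectingFamily.
Variable K : {set 'I_p}.
Hypothesis K_intersecting :
  forall i k, i \in K -> k \in K -> ~~ [disjoint arc i & arc k].
Variable k0 : 'I_p.
Hypothesis k0_in : k0 \in K.

Local Notation blocked := (blocked K).

Let pq_lt : p - q < p. Proof. lia. Qed.
Let q_lt : q < p. Proof. lia. Qed.
Let q_le_p : q <= p. Proof. lia. Qed.

(* The 2q points at cyclic distance less than q from k0, in either direction:
   arc k0 together with the arc of the q points preceding k0. *)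
Let near : {set 'I_p} := arc k0 :|: arc (shift pq_lt k0).

Lemma card_near : #|near| = q + q.
Proof.
rewrite cardsU !(card_arc q_le_p) (_ : arc k0 :&: _ = set0) ?cards0 ?subn0 //.
apply/disjoint_setI0/arc_disjoint.
by have := ltn_ord k0; rewrite /= /cdist /cshift; case_ifs; lia.
Qed.

(* An arc meeting every arc of K, in particular arc k0, starts near k0. *)
Lemma unblocked_near (j : 'I_p) :
  j \in ~: blocked -> cdist k0 j < q \/ p - q < cdist k0 j.
Proof.
rewrite !inE negb_exists => /forallP /(_ k0); rewrite k0_in /= => meets.
case: (leqP q (cdist k0 j)) => [far1|]; last by left.
case: (leqP (cdist k0 j) (p - q)) => [far2|]; last by right.
by rewrite arc_disjoint ?far1 ?far2 in meets.
Qed.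

Lemma unblocked_sub_near : ~: blocked \subset near.
Proof.
apply/subsetP => j /unblocked_near; rewrite !inE.
by have := ltn_ord k0; have := ltn_ord j; rewrite /= /cdist /cshift; case_ifs; lia.
Qed.

Lemma K_unblocked : K \subset ~: blocked.
Proof.
apply/subsetP => j j_in; rewrite !inE negb_exists; apply/forallP => k.
by apply/negP => /andP [k_in disj]; move: (K_intersecting k_in j_in); rewrite disj.
Qed.

(* Moving a starting point near k0 by q, away from k0, gives an arc disjoint from
   the original one, still near k0. *)
Let flip (j : 'I_p) : 'I_p := if cdist k0 j < q then shift pq_lt j else shift q_lt j.

Let flipE (j : 'I_p) : val (flip j) = if cdist k0 j < q then cshift j (p - q) else cshift j q.
Proof. by rewrite /flip; case: ifP. Qed.

Lemma flip_inj : {in K &, injective flip}.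
Proof.
move=> j1 j2 /(subsetP K_unblocked) /unblocked_near near1.
move=> /(subsetP K_unblocked) /unblocked_near near2.
move=> /(congr1 val); rewrite !flipE => e; apply/val_inj; move: e near1 near2.
have := ltn_ord k0; have := ltn_ord j1; have := ltn_ord j2.
by rewrite /= /cdist /cshift; case_ifs; lia.
Qed.

Lemma flip_blocked (j : 'I_p) : j \in K -> flip j \in blocked.
Proof.
move=> j_in; rewrite inE; apply/existsP; exists j; rewrite j_in /=.
apply: arc_disjoint; have := unblocked_near (subsetP K_unblocked _ j_in).
by have := ltn_ord k0; have := ltn_ord j; rewrite /= flipE /cdist /cshift; case_ifs; lia.
Qed.

Lemma flip_near (j : 'I_p) : j \in K -> flip j \in near.
Proof.
move=> j_in; have := unblocked_near (subsetP K_unblocked _ j_in); rewrite !inE.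
by have := ltn_ord k0; have := ltn_ord j; rewrite /= flipE /cdist /cshift; case_ifs; lia.
Qed.

(* The unblocked points and the flipped copy of K are disjoint inside near. *)
Lemma card_unblocked : #|~: blocked| + #|K| <= q + q.
Proof.
rewrite -(card_in_imset flip_inj) -card_near -cardsUI.
have -> : ~: blocked :&: flip @: K = set0.
  apply/setP => x; rewrite in_setI in_set0; apply/negP => /andP [x_unblocked /imsetP [j j_in x_eq]].
  by move: x_unblocked; rewrite x_eq in_setC flip_blocked.
rewrite cards0 addn0; apply: subset_leq_card; rewrite subUset unblocked_sub_near.
by apply/subsetP => x /imsetP [j j_in ->]; apply: flip_near.
Qed.

End IntersectingFamily.

Lemma katona_arcs (K : {set 'I_p}) :
  (forall i k, i \in K -> k \in K -> ~~ [disjoint arc i & arc k]) ->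
  p * #|K| <= q * (#|blocked K| + #|K|).
Proof.
move=> K_int; have [->|[k0 k0_in]] := set_0Vmem K; first by rewrite cards0; lia.
have split_p : #|blocked K| + #|~: blocked K| = p by rewrite cardsC card_ord.
have small := card_unblocked K_int k0_in.
have K_le : #|K| <= #|~: blocked K| by apply/subset_leq_card/K_unblocked.
have K_le_q : #|K| <= q by lia.
(* |blocked K| >= p - 2q + |K| and |K| <= q give the bound *)
have : #|K| * (p - 2 * q) <= q * (p - 2 * q) by apply: leq_mul.
nia.
Qed.

End Katona.

End CircularArcs.

Lemma sum_exchange_card (I : finType) (J : Type) (r : seq J) (A : J -> {set I}) (a : J -> R) :
  \sum_(i : I) \sum_(j <- r | i \in A j) a j = \sum_(j <- r) INR #|A j| * a j.
Proof.
under eq_bigr do rewrite big_mkcond.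
by rewrite exchange_big; apply: eq_bigr => j _; rewrite -big_mkcond sum_const_card.
Qed.

Section Averaging.
Variables (n q : nat) (m : R) (c : {set 'I_n.+1} -> R -> Prop).
Hypotheses (q_gt0 : (0 < q)%nat) (two_q_le : (2 * q <= n.+1)%nat) (m_ge0 : 0 <= m).
Hypothesis c_colouring : fractional_coloring q m c.

Local Notation P := n.+1.

Let q_le_P : (q <= P)%nat. Proof. lia. Qed.

Let window (x : R) : Prop := 0 <= x < m.

Lemma neighbour_union_window (v : {set 'I_P}) :
  forall x, neighbour_union q c v x -> window x.
Proof. by move=> x [u [/andP [u_vertex _] cux]]; apply: (c_colouring.1 u u_vertex).1. Qed.

(* The colour classes of the arcs, indexed by nat, cut [0, m) into atoms. *)
Let colour (k : nat) : R -> Prop := c (arc q (inord k : 'I_P)).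

Definition present (bs : seq bool) : {set 'I_P} := [set i : 'I_P | nth false bs i].

Definition atom_mass (bs : seq bool) : R := om (fun x => window x /\ atom colour bs x).

Lemma atom_present (bs : seq bool) (x : R) (i : 'I_P) :
  bs \in sign_vectors P -> atom colour bs x -> (i \in present bs <-> c (arc q i) x).
Proof.
move=> bs_in x_atom; rewrite inE.
have := atomP (k := i) x_atom; rewrite (size_sign_vectors bs_in) /colour inord_val.
by apply; apply: ltn_ord.
Qed.

Lemma atom_mass_ge0 (bs : seq bool) : 0 <= atom_mass bs.
Proof. by apply: bounded_om_ge0 m_ge0 _ _ => x []. Qed.

Lemma colour_measurable (k : nat) : lebesgue_measurable (colour k).
Proof. exact: (c_colouring.1 _ (arc_vertex q_le_P (inord k))).2.1. Qed.

Lemma colour_class_split (i : 'I_P) :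
  \sum_(bs <- sign_vectors P | i \in present bs) atom_mass bs = 1.
Proof.
have [ci_window [_ ci_one]] := c_colouring.1 _ (arc_vertex q_le_P i).
rewrite (outer_measure_atoms P colour_measurable ci_one) big_mkcond.
apply: eq_big_seq => bs bs_in; case: ifP => i_present.
- congr om; apply: pred_ext => x; split=> [[window_x x_atom] | [cix x_atom]].
  + by split=> //; apply/(atom_present _ bs_in x_atom).
  + by split=> //; apply: ci_window.
- symmetry; apply: omE; apply: outer_measure_empty => x [cix x_atom].
  by move: i_present; move/(atom_present i bs_in x_atom): cix => ->.
Qed.

(* An atom carrying an arc disjoint from arc i lies in the neighbourhood union of arc i. *)
Lemma neighbourhood_lower (i : 'I_P) :
  \sum_(bs <- sign_vectors P | i \in blocked q (present bs)) atom_mass bs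
  <= om (neighbour_union q c (arc q i)).
Proof.
have N_window := @neighbour_union_window (arc q i).
have N_measure := bounded_outer_measure m_ge0 N_window.
rewrite [X in _ <= X](outer_measure_atoms P colour_measurable N_measure).
rewrite [X in _ <= X](bigID (fun bs => i \in blocked q (present bs))) /=.
rewrite -[X in X <= _]Rplus_0_r; apply: Rplus_le_compat; last first.
  apply: (big_ind (Rle 0)) => [|x y|bs _]; [lra | lra | ].
  by apply: bounded_om_ge0 m_ge0 _ _ => x [/N_window].
apply: Req_le; rewrite big_seq_cond [RHS]big_seq_cond; apply: eq_bigr => bs /andP [bs_in].
rewrite inE => /exists_inP [k k_present disj].
congr om; apply: pred_ext => x; split=> [[window_x x_atom] | [Nx x_atom]]; last first.
  by split=> //; apply: N_window.
split=> //; exists (arc q k); split; last by apply/(atom_present _ bs_in x_atom).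
by rewrite /kneser_adj !(arc_vertex q_le_P).
Qed.

(* On each atom the Katona bound holds: either two of its arcs are disjoint and
   the atom is empty, or its arcs form an intersecting family. *)
Lemma atom_katona (bs : seq bool) : bs \in sign_vectors P ->
  0 <= (INR q * INR #|blocked q (present bs)| + (INR q - INR P) * INR #|present bs|)
       * atom_mass bs.
Proof.
move=> bs_in.
case: (boolP [exists i in present bs, exists k in present bs, [disjoint arc q i & arc q k]]).
- move=> /exists_inP [i i_in /exists_inP [k k_in disj]].
  rewrite /atom_mass (_ : om _ = 0) ?Rmult_0_r; first exact: Rle_refl.
  apply: omE; apply: outer_measure_empty => x [_ x_atom].
  apply: (c_colouring.2 (arc q i) (arc q k)); first by rewrite /kneser_adj !(arc_vertex q_le_P).
  by split; apply/(atom_present _ bs_in x_atom).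
- move=> no_disjoint.
  have K_int i k : i \in present bs -> k \in present bs -> ~~ [disjoint arc q i & arc q k].
    move=> i_in k_in; apply/negP => disj; move/negP: no_disjoint; apply.
    by apply/exists_inP; exists i => //; apply/exists_inP; exists k.
  have /leP/le_INR := katona_arcs q_gt0 two_q_le K_int.
  rewrite !mult_INR plus_INR => bound.
  by apply: Rmult_le_pos (atom_mass_ge0 bs); lra.
Qed.

Lemma averaging :
  0 <= \sum_(i : 'I_P) (INR q * om (neighbour_union q c (arc q i)) + INR q - INR P).
Proof.
pose weight (i : 'I_P) :=
  INR q * \sum_(bs <- sign_vectors P | i \in blocked q (present bs)) atom_mass bs
  + (INR q - INR P) * \sum_(bs <- sign_vectors P | i \in present bs) atom_mass bs.
have weight_le i : weight i <= INR q * om (neighbour_union q c (arc q i)) + INR q - INR P.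
  rewrite /weight colour_class_split; have := neighbourhood_lower i.
  by have := pos_INR q; nra.
apply: Rle_trans (sum_le (fun i _ _ => weight_le i)).
have -> : \sum_(i : 'I_P) weight i = \sum_(bs <- sign_vectors P)
    (INR q * INR #|blocked q (present bs)| + (INR q - INR P) * INR #|present bs|) * atom_mass bs.
  rewrite big_split -!sum_scale !sum_exchange_card !sum_scale -big_split.
  apply: eq_bigr => bs _; by rewrite Rmult_plus_distr_r !Rmult_assoc.
rewrite big_seq; apply: (big_ind (Rle 0)) => [|x y|bs bs_in]; [lra | lra |].
exact: atom_katona.
Qed.

Lemma heavy_arc : exists i : 'I_P,
  outer_measure_is (neighbour_union q c (arc q i)) (om (neighbour_union q c (arc q i))) /\
  INR P - INR q <= INR q * om (neighbour_union q c (arc q i)).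
Proof.
have [i heavy] := sum_ge0_witness ord0 averaging.
exists i; split; last by lra.
by apply: (bounded_outer_measure m_ge0); apply: neighbour_union_window.
Qed.

End Averaging.

(* Outside R_scope, so that the %N comparisons below denote nat comparisons. *)
Local Close Scope R_scope.

Theorem mainTheorem8 (eps : R) (p q : nat) :
  (0 <= eps)%R -> (0 < q)%N -> (2 * q <= p)%N ->
  forall c : {set 'I_p} -> R -> Prop,
    fractional_coloring q (INR p / INR q + eps)%R c ->
    exists v : {set 'I_p}, kneser_vertex q v /\
      exists r : R, outer_measure_is (neighbour_union q c v) r /\
                    (INR p / INR q - 1 <= r)%R.
Proof.
case: p => [|n] eps_ge0 q_gt0 two_q_le c c_colouring; first by lia.
have q_pos : (0 < INR q)%R by apply/lt_0_INR/ltP.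
have m_ge0 : (0 <= INR n.+1 / INR q + eps)%R.
  by have := Rdiv_lt_0_compat _ _ (lt_0_INR _ (Nat.lt_0_succ n)) q_pos; lra.
have [i [N_measure heavy]] := heavy_arc q_gt0 two_q_le m_ge0 c_colouring.
exists (arc q i); split; first by apply: arc_vertex; lia.
exists (om (neighbour_union q c (arc q i))); split=> //.
apply: (Rmult_le_reg_l (INR q)) => //.
have p_div_q : (INR q * (INR n.+1 / INR q) = INR n.+1)%R by field; lra.
by rewrite Rmult_minus_distr_l Rmult_1_r p_div_q; lra.
Qed.
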